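(* Let $\phi$ be a formula well-formed in $\Sigma$ and $a,b$ terms of a common name type well-typed in $\Sigma$. In the sequent calculus $NL^{\Rightarrow}$: if $\Sigma;\Gamma,(a\;b)\cdot\phi\Rightarrow\Delta$ is derivable, then $\Sigma;\Gamma,\phi\Rightarrow\Delta$ has a derivation of the same logical height; and if $\Sigma;\Gamma\Rightarrow(a\;b)\cdot\phi,\Delta$ is derivable, then $\Sigma;\Gamma\Rightarrow\phi,\Delta$ has a derivation of the same logical height.
   Context: Types $\tau ::= \delta \mid \nu \mid \langle\nu\rangle\tau$ ($\delta$ data types, $\nu$ name types). Terms $t ::= x \mid \mathsf{a} \mid c \mid f(\vec t)$ over variables $x$ and a disjoint countably infinite set of name-symbols $\mathsf a$; the signature contains, for all $\nu,\tau$, swapping $(a\;b)\cdot t$, abstraction $\langle a\rangle t$, equality $t\approx u$, freshness $a\#t$, besides constants $c$, function symbols $f$, relation symbols $p$. Formulas: $\top,\bot$, atoms, $\wedge,\vee,\supset,\forall x{:}\tau,\exists x{:}\tau$, and $\mathsf N\mathsf a{:}\nu.\phi$ (binding the name-symbol $\mathsf a$). Swapping on formulas: $(a\;b)\cdot\top=\top$, $(a\;b)\cdot\bot=\bot$, $(a\;b)\cdot p(\vec t)=p((a\;b)\cdot\vec t)$, commuting with $\wedge,\vee,\supset$, with $\forall x,\exists x$ (for $x$ not free in $a,b$) and with $\mathsf N\mathsf a$ (for $\mathsf a$ not occurring in $a,b$). Contexts $\Sigma::=\cdot\mid\Sigma,x{:}\tau\mid\Sigma\#\mathsf a{:}\nu$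 (no symbol twice; $\Sigma\#\mathsf a{:}\nu$ means $\mathsf a$ is fresh for everything in $\Sigma$); $Tm_\Sigma$ = terms well-typed in $\Sigma$; $|\cdot|=\emptyset$, $|\Sigma,x{:}\tau|=|\Sigma|$, $|\Sigma\#\mathsf a{:}\nu|=|\Sigma|\cup\{\mathsf a\#t\mid t\in Tm_\Sigma\}$. Rules of $NL^{\Rightarrow}$ for $\Sigma;\Gamma\Rightarrow\Delta$: (i) classical G3c rules: initial sequents $\Sigma;\Gamma,P\Rightarrow P,\Delta$ ($P$ atomic), $\top R$, $\bot L$, context-sharing left/right rules for $\wedge,\vee,\supset,\forall,\exists$; (ii) $\mathsf N R$: from $\Sigma\#\mathsf a{:}\nu;\Gamma\Rightarrow\phi,\Delta$ infer $\Sigma;\Gamma\Rightarrow\mathsf N\mathsf a{:}\nu.\phi,\Delta$; $\mathsf N L$: from $\Sigma\#\mathsf a{:}\nu;\Gamma,\phi\Rightarrow\Delta$ infer $\Sigma;\Gamma,\mathsf N\mathsf a{:}\nu.\phi\Rightarrow\Delta$ ($\mathsf a\notin\Sigma$); (iii) nonlogical rules: $\approx R$: from $\Sigma;\Gamma,t\approx t\Rightarrow\Delta$ infer $\Sigma;\Gamma\Rightarrow\Delta$; $\approx S$: from $\Sigma;\Gamma,t\approx u,P(t),P(u)\Rightarrow\Delta$ infer $\Sigma;\Gamma,t\approx u,P(t)\Rightarrow\Delta$; for each instance $\bigwedge_j P_j\supset\bigvee_{i\le m}Q_i$ of (S1) $(a\;a)\cdot x\approx x$, (S2) $(a\;b)\cdot(a\;b)\cdot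 x\approx x$, (S3) $(a\;b)\cdot a\approx b$, (E1) $(a\;b)\cdot c\approx c$, (E2) $(a\;b)\cdot f(\vec t)\approx f((a\;b)\cdot\vec t)$, (E3) $p(\vec t)\supset p((a\;b)\cdot\vec t)$, (F1) $a\#x\wedge b\#x\supset(a\;b)\cdot x\approx x$, (F2) $a\#b$ ($a,b$ of distinct name types), (F3) $a\#a\supset\bot$, (F4) $a\#b\vee a\approx b$, (A1) $a\#y\wedge x\approx(a\;b)\cdot y\supset\langle a\rangle x\approx\langle b\rangle y$ (arbitrary well-typed terms), the rule: from $\Sigma;\Gamma,\vec P,Q_i\Rightarrow\Delta$ for all $i$ infer $\Sigma;\Gamma,\vec P\Rightarrow\Delta$; (A2) from $\Sigma;\Gamma,E,a\approx b,t\approx u\Rightarrow\Delta$ and $\Sigma;\Gamma,E,a\#u,t\approx(a\;b)\cdot u\Rightarrow\Delta$ infer $\Sigma;\Gamma,E\Rightarrow\Delta$, $E$ being $\langle a\rangle t\approx\langle b\rangle u$; (A3) from $\Sigma\vdash t:\langle\nu\rangle\sigma$ and $\Sigma,a{:}\nu,x{:}\sigma;\Gamma,t\approx\langle a\rangle x\Rightarrow\Delta$ ($a,x\notin\Sigma$) infer $\Sigma;\Gamma\Rightarrow\Delta$; (F) from $\Sigma\#\mathsf a{:}\nu;\Gamma\Rightarrow\Delta$ ($\mathsf a\notin\Sigma$) infer $\Sigma;\Gamma\Rightarrow\Delta$; ($\Sigma\#$) from $\Sigma;\Gamma,\mathsf a\#t\Rightarrow\Delta$ with $\mathsf a\#t\in|\Sigma|$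 infer $\Sigma;\Gamma\Rightarrow\Delta$. The rules in (i) and (ii) are the logical rules; the logical height of a derivation is the maximum number of logical rules on any branch. *)

(* Syntax and sequent calculus NL^=> of nominal logic,
   in locally-nameless style (bound variables / bound name-symbols are
   de Bruijn indices, free ones are named by nat). *)
From Stdlib Require Import List Permutation Arith.
Import ListNotations.
Set Implicit Arguments.

(** Types  tau ::= delta | nu | <nu>tau  (data/name types indexed by nat) *)
Inductive ty : Type :=
| TData (d : nat)
| TName (nu : nat)
| TAbs (nu : nat) (t : ty).

(** A signature: constants, function symbols and relation symbols with types.
    Swapping, abstraction, equality and freshness are built in. *)
Record signature : Type := {
  Con : Type; Fun : Type; Rel : Type;
  con_ty : Con -> ty;
  fun_ty : Fun -> list ty * ty;
  rel_ty : Rel -> list ty }.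

Section Syntax.
Variable Sg : signature.

Inductive tm : Type :=
| tfv (x : nat)
| tbv (i : nat)
| tfn (a : nat)
| tbn (i : nat)
| tcon (c : Con Sg)
| tapp (f : Fun Sg) (ts : list tm)
| tswap (a b t : tm)
| tabs (a t : tm).

Inductive fm : Type :=
| fTop | fBot
| fPred (p : Rel Sg) (ts : list tm)
| fEq (t u : tm)
| fFresh (a t : tm)
| fAnd (A B : fm) | fOr (A B : fm) | fImp (A B : fm)
| fAll (tau : ty) (A : fm)  (* binds variable index 0 *)
| fEx (tau : ty) (A : fm)
| fNew (nu : nat) (A : fm). (* binds name-symbol index 0 *)

Definition is_atom (A : fm) : Prop :=
  match A with fPred _ _ | fEq _ _ | fFresh _ _ => True | _ => False end.

(** Contexts; the head of the list is the most recent entry. *)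
Inductive centry : Type :=
| CVar (x : nat) (tau : ty)
| CName (a : nat) (nu : nat).
Definition ctx := list centry.

Fixpoint ctx_vars (G : ctx) : list nat :=
  match G with [] => [] | CVar x _ :: G' => x :: ctx_vars G' | CName _ _ :: G' => ctx_vars G' end.
Fixpoint ctx_names (G : ctx) : list nat :=
  match G with [] => [] | CName a _ :: G' => a :: ctx_names G' | CVar _ _ :: G' => ctx_names G' end.

Definition ctx_ok (G : ctx) : Prop := NoDup (ctx_vars G) /\ NoDup (ctx_names G).

Inductive has_ty (G : ctx) : tm -> ty -> Prop :=
| ty_var x tau : In (CVar x tau) G -> has_ty G (tfv x) tau
| ty_name a nu : In (CName a nu) G -> has_ty G (tfn a) (TName nu)
| ty_con c : has_ty G (tcon c) (con_ty Sg c)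
| ty_app f ts : Forall2 (has_ty G) ts (fst (fun_ty Sg f)) -> has_ty G (tapp f ts) (snd (fun_ty Sg f))
| ty_swap a b t nu tau : has_ty G a (TName nu) -> has_ty G b (TName nu) -> has_ty G t tau ->
    has_ty G (tswap a b t) tau
| ty_abs a t nu tau : has_ty G a (TName nu) -> has_ty G t tau -> has_ty G (tabs a t) (TAbs nu tau).

Fixpoint open_tm (k : nat) (u : tm) (t : tm) : tm :=
  match t with
  | tbv i => if Nat.eqb i k then u else t
  | tapp f ts => tapp f (map (open_tm k u) ts)
  | tswap a b t' => tswap (open_tm k u a) (open_tm k u b) (open_tm k u t')
  | tabs a t' => tabs (open_tm k u a) (open_tm k u t')
  | _ => t
  end.
Fixpoint open_ntm (k : nat) (n : nat) (t : tm) : tm :=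
  match t with
  | tbn i => if Nat.eqb i k then tfn n else t
  | tapp f ts => tapp f (map (open_ntm k n) ts)
  | tswap a b t' => tswap (open_ntm k n a) (open_ntm k n b) (open_ntm k n t')
  | tabs a t' => tabs (open_ntm k n a) (open_ntm k n t')
  | _ => t
  end.
Fixpoint subst_tm (z : nat) (u : tm) (t : tm) : tm :=
  match t with
  | tfv x => if Nat.eqb x z then u else t
  | tapp f ts => tapp f (map (subst_tm z u) ts)
  | tswap a b t' => tswap (subst_tm z u a) (subst_tm z u b) (subst_tm z u t')
  | tabs a t' => tabs (subst_tm z u a) (subst_tm z u t')
  | _ => t
  end.

Fixpoint map_atoms (g : tm -> tm) (A : fm) : fm :=
  match A with
  | fTop => fTop | fBot => fBot
  | fPred p ts => fPred p (map g ts)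
  | fEq t u => fEq (g t) (g u)
  | fFresh a t => fFresh (g a) (g t)
  | fAnd A B => fAnd (map_atoms g A) (map_atoms g B)
  | fOr A B => fOr (map_atoms g A) (map_atoms g B)
  | fImp A B => fImp (map_atoms g A) (map_atoms g B)
  | fAll tau A => fAll tau (map_atoms g A)
  | fEx tau A => fEx tau (map_atoms g A)
  | fNew nu A => fNew nu (map_atoms g A)
  end.

Fixpoint open_fm (k : nat) (u : tm) (A : fm) : fm :=
  match A with
  | fTop => fTop | fBot => fBot
  | fPred p ts => fPred p (map (open_tm k u) ts)
  | fEq t v => fEq (open_tm k u t) (open_tm k u v)
  | fFresh a t => fFresh (open_tm k u a) (open_tm k u t)
  | fAnd A B => fAnd (open_fm k u A) (open_fm k u B)
  | fOr A B => fOr (open_fm k u A) (open_fm k u B)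
  | fImp A B => fImp (open_fm k u A) (open_fm k u B)
  | fAll tau A => fAll tau (open_fm (S k) u A)
  | fEx tau A => fEx tau (open_fm (S k) u A)
  | fNew nu A => fNew nu (open_fm k u A)
  end.
Fixpoint open_nfm (k : nat) (n : nat) (A : fm) : fm :=
  match A with
  | fTop => fTop | fBot => fBot
  | fPred p ts => fPred p (map (open_ntm k n) ts)
  | fEq t v => fEq (open_ntm k n t) (open_ntm k n v)
  | fFresh a t => fFresh (open_ntm k n a) (open_ntm k n t)
  | fAnd A B => fAnd (open_nfm k n A) (open_nfm k n B)
  | fOr A B => fOr (open_nfm k n A) (open_nfm k n B)
  | fImp A B => fImp (open_nfm k n A) (open_nfm k n B)
  | fAll tau A => fAll tau (open_nfm k n A)
  | fEx tau A => fEx tau (open_nfm k n A)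
  | fNew nu A => fNew nu (open_nfm (S k) n A)
  end.

(** Swapping on formulas: (a b).phi.  Since a, b are well-typed (hence
    closed) terms, swapping commutes with all binders without capture. *)
Definition swap_fm (a b : tm) (A : fm) : fm := map_atoms (tswap a b) A.

Fixpoint fv_tm (t : tm) : list nat :=
  match t with
  | tfv x => [x]
  | tapp _ ts => flat_map fv_tm ts
  | tswap a b t' => fv_tm a ++ fv_tm b ++ fv_tm t'
  | tabs a t' => fv_tm a ++ fv_tm t'
  | _ => []
  end.
Fixpoint fn_tm (t : tm) : list nat :=
  match t with
  | tfn a => [a]
  | tapp _ ts => flat_map fn_tm ts
  | tswap a b t' => fn_tm a ++ fn_tm b ++ fn_tm t'
  | tabs a t' => fn_tm a ++ fn_tm t'
  | _ => []
  end.
Fixpoint syms_fm (g : tm -> list nat) (A : fm) : list nat :=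
  match A with
  | fTop | fBot => []
  | fPred _ ts => flat_map g ts
  | fEq t u => g t ++ g u
  | fFresh a t => g a ++ g t
  | fAnd A B | fOr A B | fImp A B => syms_fm g A ++ syms_fm g B
  | fAll _ A | fEx _ A | fNew _ A => syms_fm g A
  end.
Definition fv_fm := syms_fm fv_tm.
Definition fn_fm := syms_fm fn_tm.

Definition fresh_var (y : nat) (G : ctx) (Gam Del : list fm) : Prop :=
  ~ In y (ctx_vars G) /\ (forall A, In A Gam \/ In A Del -> ~ In y (fv_fm A)).
Definition fresh_name (a : nat) (G : ctx) (Gam Del : list fm) : Prop :=
  ~ In a (ctx_names G) /\ (forall A, In A Gam \/ In A Del -> ~ In a (fn_fm A)).

Inductive wf_fm : ctx -> fm -> Prop :=
| wf_top G : wf_fm G fTop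
| wf_bot G : wf_fm G fBot
| wf_pred G p ts : Forall2 (has_ty G) ts (rel_ty Sg p) -> wf_fm G (fPred p ts)
| wf_eq G t u tau : has_ty G t tau -> has_ty G u tau -> wf_fm G (fEq t u)
| wf_fresh G a t nu tau : has_ty G a (TName nu) -> has_ty G t tau -> wf_fm G (fFresh a t)
| wf_and G A B : wf_fm G A -> wf_fm G B -> wf_fm G (fAnd A B)
| wf_or G A B : wf_fm G A -> wf_fm G B -> wf_fm G (fOr A B)
| wf_imp G A B : wf_fm G A -> wf_fm G B -> wf_fm G (fImp A B)
| wf_all G tau A : (forall x, ~ In x (ctx_vars G) -> wf_fm (CVar x tau :: G) (open_fm 0 (tfv x) A)) ->
    wf_fm G (fAll tau A)
| wf_ex G tau A : (forall x, ~ In x (ctx_vars G) -> wf_fm (CVar x tau :: G) (open_fm 0 (tfv x) A)) ->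
    wf_fm G (fEx tau A)
| wf_new G nu A : (forall a, ~ In a (ctx_names G) -> wf_fm (CName a nu :: G) (open_nfm 0 a A)) ->
    wf_fm G (fNew nu A).

(** |Sigma| : the freshness facts a # t, for Sigma # a:nu and t in Tm of the prefix. *)
Fixpoint in_bar (G : ctx) (P : fm) : Prop :=
  match G with
  | [] => False
  | CVar _ _ :: G' => in_bar G' P
  | CName a _ :: G' => (exists t tau, has_ty G' t tau /\ P = fFresh (tfn a) t) \/ in_bar G' P
  end.

(** Instances  /\ Ps  ->  \/_i (/\ Qs_i)  of the nonlogical axioms; the rule
    is: from  Gamma, Ps, Qs_i => Delta  for all i, infer  Gamma, Ps => Delta.
    (A2 is also expressed in this format, with two conjunctive disjuncts.) *)
Inductive ax_instance (G : ctx) : list fm -> list (list fm) -> Prop :=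
| ax_S1 a nu x tau : has_ty G a (TName nu) -> has_ty G x tau ->
    ax_instance G [] [[fEq (tswap a a x) x]]
| ax_S2 a b nu x tau : has_ty G a (TName nu) -> has_ty G b (TName nu) -> has_ty G x tau ->
    ax_instance G [] [[fEq (tswap a b (tswap a b x)) x]]
| ax_S3 a b nu : has_ty G a (TName nu) -> has_ty G b (TName nu) ->
    ax_instance G [] [[fEq (tswap a b a) b]]
| ax_E1 a b nu c : has_ty G a (TName nu) -> has_ty G b (TName nu) ->
    ax_instance G [] [[fEq (tswap a b (tcon c)) (tcon c)]]
| ax_E2 a b nu f ts tau : has_ty G a (TName nu) -> has_ty G b (TName nu) ->
    has_ty G (tapp f ts) tau ->
    ax_instance G [] [[fEq (tswap a b (tapp f ts)) (tapp f (map (tswap a b) ts))]]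
| ax_E2_swap a b nu c d t tau : has_ty G a (TName nu) -> has_ty G b (TName nu) ->
    has_ty G (tswap c d t) tau ->
    ax_instance G [] [[fEq (tswap a b (tswap c d t))
                           (tswap (tswap a b c) (tswap a b d) (tswap a b t))]]
| ax_E2_abs a b nu c t tau : has_ty G a (TName nu) -> has_ty G b (TName nu) ->
    has_ty G (tabs c t) tau ->
    ax_instance G [] [[fEq (tswap a b (tabs c t)) (tabs (tswap a b c) (tswap a b t))]]
| ax_E3 a b nu P : has_ty G a (TName nu) -> has_ty G b (TName nu) ->
    is_atom P -> wf_fm G P ->
    ax_instance G [P] [[swap_fm a b P]]
| ax_F1 a b nu x tau : has_ty G a (TName nu) -> has_ty G b (TName nu) -> has_ty G x tau ->
    ax_instance G [fFresh a x; fFresh b x] [[fEq (tswap a b x) x]]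
| ax_F2 a b nu nu' : nu <> nu' -> has_ty G a (TName nu) -> has_ty G b (TName nu') ->
    ax_instance G [] [[fFresh a b]]
| ax_F3 a nu : has_ty G a (TName nu) ->
    ax_instance G [fFresh a a] []
| ax_F4 a b nu : has_ty G a (TName nu) -> has_ty G b (TName nu) ->
    ax_instance G [] [[fFresh a b]; [fEq a b]]
| ax_A1 a b nu x y tau : has_ty G a (TName nu) -> has_ty G b (TName nu) ->
    has_ty G x tau -> has_ty G y tau ->
    ax_instance G [fFresh a y; fEq x (tswap a b y)] [[fEq (tabs a x) (tabs b y)]]
| ax_A2 a b t u :
    ax_instance G [fEq (tabs a t) (tabs b u)]
                  [[fEq a b; fEq t u]; [fFresh a u; fEq t (tswap a b u)]].

(** der G Gam Del n :  G; Gam => Del  has a derivation of logical height <= n.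
    Gam, Del are multisets (lists up to permutation). Logical rules (G3c
    rules and N-rules) increase the height; nonlogical rules do not. *)
Inductive der : ctx -> list fm -> list fm -> nat -> Prop :=
| d_init G Gam Del P n : is_atom P -> In P Gam -> In P Del -> der G Gam Del n
| d_topR G Gam Del n : In fTop Del -> der G Gam Del n
| d_botL G Gam Del n : In fBot Gam -> der G Gam Del n
| d_andL G Gam Gam' Del A B n : Permutation Gam (fAnd A B :: Gam') ->
    der G (A :: B :: Gam') Del n -> der G Gam Del (S n)
| d_andR G Gam Del Del' A B n : Permutation Del (fAnd A B :: Del') ->
    der G Gam (A :: Del') n -> der G Gam (B :: Del') n -> der G Gam Del (S n)
| d_orL G Gam Gam' Del A B n : Permutation Gam (fOr A B :: Gam') ->
    der G (A :: Gam') Del n -> der G (B :: Gam') Del n -> der G Gam Del (S n)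
| d_orR G Gam Del Del' A B n : Permutation Del (fOr A B :: Del') ->
    der G Gam (A :: B :: Del') n -> der G Gam Del (S n)
| d_impL G Gam Gam' Del A B n : Permutation Gam (fImp A B :: Gam') ->
    der G Gam' (A :: Del) n -> der G (B :: Gam') Del n -> der G Gam Del (S n)
| d_impR G Gam Del Del' A B n : Permutation Del (fImp A B :: Del') ->
    der G (A :: Gam) (B :: Del') n -> der G Gam Del (S n)
| d_allL G Gam Gam' Del tau A t n : Permutation Gam (fAll tau A :: Gam') ->
    has_ty G t tau ->
    der G (open_fm 0 t A :: fAll tau A :: Gam') Del n -> der G Gam Del (S n)
| d_allR G Gam Del Del' tau A y n : Permutation Del (fAll tau A :: Del') ->
    fresh_var y G Gam Del ->
    der (CVar y tau :: G) Gam (open_fm 0 (tfv y) A :: Del') n -> der G Gam Del (S n)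
| d_exL G Gam Gam' Del tau A y n : Permutation Gam (fEx tau A :: Gam') ->
    fresh_var y G Gam Del ->
    der (CVar y tau :: G) (open_fm 0 (tfv y) A :: Gam') Del n -> der G Gam Del (S n)
| d_exR G Gam Del Del' tau A t n : Permutation Del (fEx tau A :: Del') ->
    has_ty G t tau ->
    der G Gam (open_fm 0 t A :: fEx tau A :: Del') n -> der G Gam Del (S n)
| d_newR G Gam Del Del' nu A a n : Permutation Del (fNew nu A :: Del') ->
    fresh_name a G Gam Del ->
    der (CName a nu :: G) Gam (open_nfm 0 a A :: Del') n -> der G Gam Del (S n)
| d_newL G Gam Gam' Del nu A a n : Permutation Gam (fNew nu A :: Gam') ->
    fresh_name a G Gam Del ->
    der (CName a nu :: G) (open_nfm 0 a A :: Gam') Del n -> der G Gam Del (S n)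
| d_eqR G Gam Del t tau n : has_ty G t tau ->
    der G (fEq t t :: Gam) Del n -> der G Gam Del n
| d_eqS G Gam Gam' Del Q z t u n : is_atom Q ->
    Permutation Gam (fEq t u :: map_atoms (subst_tm z t) Q :: Gam') ->
    der G (map_atoms (subst_tm z u) Q :: Gam) Del n -> der G Gam Del n
| d_ax G Gam Gam' Del Ps Qss n : ax_instance G Ps Qss ->
    Permutation Gam (Ps ++ Gam') ->
    (forall Qs, In Qs Qss -> der G (Qs ++ Gam) Del n) -> der G Gam Del n
| d_A3 G Gam Del t nu sigma a x n : has_ty G t (TAbs nu sigma) -> a <> x ->
    fresh_var a G Gam Del -> fresh_var x G Gam Del ->
    der (CVar x sigma :: CVar a (TName nu) :: G) (fEq t (tabs (tfv a) (tfv x)) :: Gam) Del n ->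
    der G Gam Del n
| d_F G Gam Del a nu n : fresh_name a G Gam Del ->
    der (CName a nu :: G) Gam Del n -> der G Gam Del n
| d_bar G Gam Del P n : in_bar G P ->
    der G (P :: Gam) Del n -> der G Gam Del n.

End Syntax.

(* Generalize to: if [G; Gs => Ds] has a derivation of logical height [n] and [Gt => Dt] arises
   from it by replacing some formulas [(a b).psi] by [psi] and adding well-formed atoms, then
   [G; Gt => Dt] has a derivation of height [n].  Since [a] and [b] are closed terms, swapping
   commutes with the connectives and with opening binders, so every logical rule is mirrored by
   the same rule.  Nonlogical rules only inspect atoms; an atom [(a b).P] they need while the
   target holds [P] is put back by the height-free rule E3.  An initial sequent [(a b).P => P]
   becomes derivable by E3, which gives [(a b).(a b).P], followed by S2 and the substitution
   rule on every argument of [P]. *)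
From Stdlib Require Import List Permutation Arith Lia.
Import ListNotations.

#[local] Arguments tfv {Sg} x.
#[local] Arguments tfn {Sg} a.
#[local] Arguments tbv {Sg} i.
#[local] Arguments tbn {Sg} i.
#[local] Arguments tcon {Sg} c.
#[local] Arguments fTop {Sg}.
#[local] Arguments fBot {Sg}.

Section NominalSequents.
Context {Sg : signature}.
Notation tm := (tm Sg).
Notation fm := (fm Sg).

Section TmNestedInd.
Variable P : tm -> Prop.
Hypothesis P_fv : forall x, P (tfv x).
Hypothesis P_bv : forall i, P (tbv i).
Hypothesis P_fn : forall a, P (tfn a).
Hypothesis P_bn : forall i, P (tbn i).
Hypothesis P_con : forall c, P (tcon c).
Hypothesis P_app : forall f ts, Forall P ts -> P (tapp f ts).
Hypothesis P_swap : forall a b t, P a -> P b -> P t -> P (tswap a b t).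
Hypothesis P_abs : forall a t, P a -> P t -> P (tabs a t).

Fixpoint tm_nested_ind (t : tm) : P t :=
  match t with
  | tfv x => P_fv x | tbv i => P_bv i | tfn a => P_fn a | tbn i => P_bn i
  | tcon c => P_con c
  | tapp f ts => P_app f ts ((fix go l : Forall P l :=
       match l with [] => Forall_nil _ | s :: l' => Forall_cons _ (tm_nested_ind s) (go l') end) ts)
  | tswap a b t => P_swap _ _ _ (tm_nested_ind a) (tm_nested_ind b) (tm_nested_ind t)
  | tabs a t => P_abs _ _ (tm_nested_ind a) (tm_nested_ind t)
  end.
End TmNestedInd.

Section HasTyNestedInd.
Variable P : ctx -> tm -> ty -> Prop.
Hypothesis P_var : forall G x tau, In (CVar x tau) G -> P G (tfv x) tau.
Hypothesis P_name : forall G a nu, In (CName a nu) G -> P G (tfn a) (TName nu).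
Hypothesis P_con : forall G c, P G (tcon c) (con_ty Sg c).
Hypothesis P_app : forall G f ts, Forall2 (has_ty G) ts (fst (fun_ty Sg f)) ->
  Forall2 (P G) ts (fst (fun_ty Sg f)) -> P G (tapp f ts) (snd (fun_ty Sg f)).
Hypothesis P_swap : forall G a b t nu tau,
  has_ty G a (TName nu) -> P G a (TName nu) -> has_ty G b (TName nu) -> P G b (TName nu) ->
  has_ty G t tau -> P G t tau -> P G (tswap a b t) tau.
Hypothesis P_abs : forall G a t nu tau, has_ty G a (TName nu) -> P G a (TName nu) ->
  has_ty G t tau -> P G t tau -> P G (tabs a t) (TAbs nu tau).

Fixpoint has_ty_nested_ind G t tau (H : has_ty G t tau) : P G t tau :=
  match H with
  | @ty_var _ _ x tau h => P_var _ _ _ h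
  | @ty_name _ _ a nu h => P_name _ _ _ h
  | @ty_con _ _ c => P_con _ c
  | @ty_app _ _ f ts hs => P_app _ _ _ hs
      ((fix go l l' (h : Forall2 (has_ty G) l l') : Forall2 (P G) l l' :=
          match h with
          | Forall2_nil _ => Forall2_nil _
          | @Forall2_cons _ _ _ _ _ _ _ h1 h2 =>
              Forall2_cons _ _ (has_ty_nested_ind _ _ _ h1) (go _ _ h2)
          end) _ _ hs)
  | @ty_swap _ _ _ _ _ _ _ h1 h2 h3 =>
      P_swap _ _ _ _ _ _ h1 (has_ty_nested_ind _ _ _ h1) h2 (has_ty_nested_ind _ _ _ h2)
        h3 (has_ty_nested_ind _ _ _ h3)
  | @ty_abs _ _ _ _ _ _ h1 h2 =>
      P_abs _ _ _ _ _ h1 (has_ty_nested_ind _ _ _ h1) h2 (has_ty_nested_ind _ _ _ h2)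
  end.
End HasTyNestedInd.

Lemma map_id_Forall (f : tm -> tm) l : Forall (fun x => f x = x) l -> map f l = l.
Proof. induction 1; simpl; f_equal; auto. Qed.

Lemma Forall2_Forall_l {A B} (P : A -> Prop) (R : A -> B -> Prop) l l' :
  (forall x y, R x y -> P x) -> Forall2 R l l' -> Forall P l.
Proof. induction 2; constructor; eauto. Qed.

Lemma Forall2_in_l {A B} {R : A -> B -> Prop} {x l l'} :
  Forall2 R l l' -> In x l -> exists y, R x y.
Proof. induction 1; simpl; intros Hi; [contradiction|]. destruct Hi as [<-|Hi]; eauto. Qed.

Lemma Forall2_in_r {A B} {R : A -> B -> Prop} {l l' y} :
  Forall2 R l l' -> In y l' -> exists x, In x l /\ R x y.
Proof.
  induction 1; simpl; intros Hi; [contradiction|].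
  destruct Hi as [<-|Hi]; [eauto|]. destruct (IHForall2 Hi) as (x' & ? & ?); eauto.
Qed.

Lemma exists_fresh_nat (L : list nat) : exists x, ~ In x L.
Proof.
  exists (S (list_max L)). intros H.
  assert (HL : Forall (fun k => k <= list_max L) L) by (apply list_max_le; auto).
  rewrite Forall_forall in HL. apply HL in H. lia.
Qed.

Definition lc_tm (t : tm) : Prop :=
  (forall k u, open_tm k u t = t) /\ (forall k c, open_ntm k c t = t).

Lemma lc_tfv y : lc_tm (tfv y).
Proof. split; reflexivity. Qed.

Lemma has_ty_lc G t tau : has_ty G t tau -> lc_tm t.
Proof.
  intros Ht. refine (has_ty_nested_ind (fun _ t _ => lc_tm t) _ _ _ _ _ _ G t tau Ht); clear;
    unfold lc_tm; simpl; intros; try (split; reflexivity).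
  - assert (Hlc : Forall lc_tm ts) by (eapply Forall2_Forall_l; [|eassumption]; auto).
    split; intros; f_equal; apply map_id_Forall; eapply Forall_impl; try apply Hlc;
      intros s [Hs1 Hs2]; auto.
  - destruct H0, H2, H4; split; intros; f_equal; auto.
  - destruct H0, H2; split; intros; f_equal; auto.
Qed.

Fixpoint msubst_tm (f : nat -> tm) (t : tm) : tm :=
  match t with
  | tfv x => f x
  | tapp g ts => tapp g (map (msubst_tm f) ts)
  | tswap a b t' => tswap (msubst_tm f a) (msubst_tm f b) (msubst_tm f t')
  | tabs a t' => tabs (msubst_tm f a) (msubst_tm f t')
  | _ => t
  end.

Definition update (f : nat -> tm) x t : nat -> tm := fun y => if Nat.eqb y x then t else f y.

Definition subst_ok (G1 G : ctx) (f : nat -> tm) : Prop :=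
  (forall x tau, In (CVar x tau) G1 -> has_ty G (f x) tau) /\
  (forall a nu, In (CName a nu) G1 -> In (CName a nu) G).

Lemma subst_ok_id G G' : incl G G' -> subst_ok G G' (@tfv Sg).
Proof. split; intros; [constructor|]; auto. Qed.

Lemma has_ty_msubst G1 G f s sg : subst_ok G1 G f -> has_ty G1 s sg -> has_ty G (msubst_tm f s) sg.
Proof.
  intros Hf Hs. revert G f Hf.
  refine (has_ty_nested_ind (fun G1 s sg => forall G f, subst_ok G1 G f ->
    has_ty G (msubst_tm f s) sg) _ _ _ _ _ _ G1 s sg Hs); clear;
    simpl; intros.
  - apply H0; auto.
  - apply ty_name, H0; auto.
  - apply ty_con.
  - apply ty_app. clear H. induction H0; simpl; constructor; auto.
  - eapply ty_swap; [apply H0|apply H2|apply H4]; auto.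
  - eapply ty_abs; [apply H0|apply H2]; auto.
Qed.

Lemma msubst_tm_id t : msubst_tm (@tfv Sg) t = t.
Proof. induction t using tm_nested_ind; simpl; f_equal; auto. apply map_id_Forall; auto. Qed.

Lemma has_ty_weaken G G' (s : tm) sg : incl G G' -> has_ty G s sg -> has_ty G' s sg.
Proof.
  intros Hi Hs. rewrite <- (msubst_tm_id s). eapply has_ty_msubst; eauto using subst_ok_id.
Qed.

Lemma has_ty_extend e G (s : tm) sg : has_ty G s sg -> has_ty (e :: G) s sg.
Proof. apply has_ty_weaken, incl_tl, incl_refl. Qed.

Lemma msubst_open_tm f k u s : (forall y, lc_tm (f y)) ->
  msubst_tm f (open_tm k u s) = open_tm k (msubst_tm f u) (msubst_tm f s).
Proof.
  intros Hf; induction s using tm_nested_ind; simpl; f_equal; auto.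
  - symmetry; apply Hf.
  - destruct (Nat.eqb i k); auto.
  - rewrite !map_map. apply map_ext_Forall; auto.
Qed.

Lemma msubst_open_ntm f k c s : (forall y, lc_tm (f y)) ->
  msubst_tm f (open_ntm k c s) = open_ntm k c (msubst_tm f s).
Proof.
  intros Hf; induction s using tm_nested_ind; simpl; f_equal; auto.
  - symmetry; apply Hf.
  - destruct (Nat.eqb i k); auto.
  - rewrite !map_map. apply map_ext_Forall; auto.
Qed.

Lemma msubst_update_notin f x t s :
  ~ In x (fv_tm s) -> msubst_tm (update f x t) s = msubst_tm f s.
Proof.
  induction s using tm_nested_ind; simpl; intros Hx; rewrite ?in_app_iff in Hx; f_equal;
    try (match goal with IH : _ -> ?g |- ?g => apply IH; tauto end).
  - unfold update. destruct (Nat.eqb_spec x0 x); subst; tauto.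
  - apply map_ext_Forall. induction H; constructor; simpl in Hx; rewrite in_app_iff in Hx; auto.
Qed.

Lemma subst_tm_notin z (u : tm) s : ~ In z (fv_tm s) -> subst_tm z u s = s.
Proof.
  induction s using tm_nested_ind; simpl; intros Hz; rewrite ?in_app_iff in Hz; f_equal;
    try (match goal with IH : _ -> ?g |- ?g => apply IH; tauto end).
  - destruct (Nat.eqb_spec x z); subst; tauto.
  - apply map_id_Forall. induction H; constructor; simpl in Hz; rewrite in_app_iff in Hz; auto.
Qed.

Lemma in_ctx_vars x tau G : In (CVar x tau) G -> In x (ctx_vars G).
Proof.
  induction G as [|[y s|y s] G IH]; simpl; intros H; [contradiction| |];
    destruct H as [H|H]; try (injection H as -> ->); auto; discriminate.
Qed.

Lemma in_ctx_names a nu G : In (CName a nu) G -> In a (ctx_names G).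
Proof.
  induction G as [|[y s|y s] G IH]; simpl; intros H; [contradiction| |];
    destruct H as [H|H]; try (injection H as -> ->); auto; discriminate.
Qed.

Lemma in_ctx_names_inv a G : In a (ctx_names G) -> exists nu, In (CName a nu) G.
Proof.
  induction G as [|[y s|y s] G IH]; simpl; intros H; [contradiction| |].
  - destruct (IH H) as [nu Hn]; eauto.
  - destruct H as [<-|H]; eauto. destruct (IH H) as [nu Hn]; eauto.
Qed.

Lemma has_ty_fv_fn G (t : tm) tau : has_ty G t tau ->
  incl (fv_tm t) (ctx_vars G) /\ incl (fn_tm t) (ctx_names G).
Proof.
  intros Ht.
  refine (has_ty_nested_ind (fun G t _ => incl (fv_tm t) (ctx_vars G) /\
    incl (fn_tm t) (ctx_names G)) _ _ _ _ _ _ G t tau Ht); clear; simpl; intros;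
    try (split; intros y Hy; simpl in Hy; rewrite ?in_app_iff in Hy; intuition;
         subst; eauto using in_ctx_vars, in_ctx_names; fail).
  clear H; split; intros y Hy; apply in_flat_map in Hy as [s [Hs Hy]];
    induction H0; simpl in Hs; try contradiction;
    (destruct Hs as [<-|Hs]; [destruct H|]; auto).
Qed.

Definition msubst_fm (f : nat -> tm) (A : fm) : fm := map_atoms (msubst_tm f) A.

Lemma msubst_fm_id A : msubst_fm (@tfv Sg) A = A.
Proof.
  unfold msubst_fm; induction A; simpl; f_equal; auto using msubst_tm_id.
  apply map_id_Forall, Forall_forall; intros; apply msubst_tm_id.
Qed.

Lemma msubst_open_fm f k u A : (forall y, lc_tm (f y)) ->
  msubst_fm f (open_fm k u A) = open_fm k (msubst_tm f u) (msubst_fm f A).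
Proof.
  intros Hf; unfold msubst_fm; revert k; induction A; intros k; simpl; f_equal;
    auto using msubst_open_tm.
  rewrite !map_map; apply map_ext; auto using msubst_open_tm.
Qed.

Lemma msubst_open_nfm f k c A : (forall y, lc_tm (f y)) ->
  msubst_fm f (open_nfm k c A) = open_nfm k c (msubst_fm f A).
Proof.
  intros Hf; unfold msubst_fm; revert k; induction A; intros k; simpl; f_equal;
    auto using msubst_open_ntm.
  rewrite !map_map; apply map_ext; auto using msubst_open_ntm.
Qed.

Lemma msubst_fm_update_notin f x t A :
  ~ In x (fv_fm A) -> msubst_fm (update f x t) A = msubst_fm f A.
Proof.
  unfold msubst_fm, fv_fm; induction A; simpl; intros Hx; rewrite ?in_app_iff in Hx; f_equal;
    try (apply msubst_update_notin; tauto);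
    try (match goal with IH : _ -> ?g |- ?g => apply IH; tauto end).
  apply map_ext_in; intros s Hs. apply msubst_update_notin.
  intro; apply Hx, in_flat_map; eauto.
Qed.

Lemma is_atom_map_atoms (g : tm -> tm) A : is_atom (map_atoms g A) <-> is_atom A.
Proof. destruct A; simpl; tauto. Qed.

Lemma syms_map_atoms_incl (g : tm -> list nat) (h : tm -> tm) A :
  (forall t, incl (g t) (g (h t))) -> incl (syms_fm g A) (syms_fm g (map_atoms h A)).
Proof.
  intros Hg; induction A; simpl; try apply incl_app_app; auto using incl_refl.
  intros y Hy. apply in_flat_map in Hy as [s [Hs Hy]]. apply in_flat_map.
  exists (h s); split; [apply in_map|apply Hg]; auto.
Qed.

Definition wf_atom G (A : fm) : Prop := is_atom A /\ wf_fm G A.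

Lemma wf_atom_fv_fn G A : wf_atom G A ->
  incl (fv_fm A) (ctx_vars G) /\ incl (fn_fm A) (ctx_names G).
Proof.
  intros [HA Hw]; destruct A; try contradiction; inversion Hw; subst; unfold fv_fm, fn_fm; simpl.
  - split; intros y Hy; apply in_flat_map in Hy as [s [Hs Hy]];
      destruct (Forall2_in_l H1 Hs) as [tau Ht]; apply has_ty_fv_fn in Ht as [? ?]; auto.
  - apply has_ty_fv_fn in H2 as [? ?], H3 as [? ?]; split; apply incl_app; auto.
  - apply has_ty_fv_fn in H2 as [? ?], H3 as [? ?]; split; apply incl_app; auto.
Qed.

Lemma wf_atom_msubst G1 G f A : subst_ok G1 G f -> wf_atom G1 A -> wf_atom G (msubst_fm f A).
Proof.
  intros Hf [HA Hw]; split; [apply is_atom_map_atoms; auto|].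
  destruct A; try contradiction; inversion Hw; subst; simpl.
  - constructor. clear HA Hw. induction H1; simpl; constructor; eauto using has_ty_msubst.
  - eapply wf_eq; eapply has_ty_msubst; eauto.
  - eapply wf_fresh; eapply has_ty_msubst; eauto.
Qed.

Lemma wf_atom_weaken G G' A : incl G G' -> wf_atom G A -> wf_atom G' A.
Proof.
  intros Hi HA. rewrite <- (msubst_fm_id A). eapply wf_atom_msubst; eauto using subst_ok_id.
Qed.

(* Instances of well-formed formulas under typed substitutions; working with them avoids a
   substitution lemma for [wf_fm], whose binder cases quantify over all fresh symbols. *)
Definition wf_instance G (A : fm) : Prop :=
  exists G1 A0 f, wf_fm G1 A0 /\ A = msubst_fm f A0 /\ (forall y, lc_tm (f y)) /\ subst_ok G1 G f.

Lemma wf_instance_intro G G1 A0 f :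
  wf_fm G1 A0 -> (forall y, lc_tm (f y)) -> subst_ok G1 G f -> wf_instance G (msubst_fm f A0).
Proof. intros; exists G1, A0, f; auto. Qed.

Lemma wf_instance_of_wf G A : wf_fm G A -> wf_instance G A.
Proof.
  intros Hw; exists G, A, (@tfv Sg); rewrite msubst_fm_id; auto using lc_tfv, subst_ok_id, incl_refl.
Qed.

Lemma wf_instance_weaken G G' A : incl G G' -> wf_instance G A -> wf_instance G' A.
Proof.
  intros Hi (G1 & A0 & f & Hw & -> & Hlc & [Hv Hn]); exists G1, A0, f;
    split; [|split; [|split; [|split]]]; intros; eauto using has_ty_weaken.
Qed.

Lemma wf_instance_atom G A : is_atom A -> wf_instance G A -> wf_atom G A.
Proof.
  intros HA (G1 & A0 & f & Hw & -> & Hlc & Hf). eapply wf_atom_msubst; eauto.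
  split; auto. eapply is_atom_map_atoms; eauto.
Qed.

Lemma wf_instance_open G G1 tau A0 f t :
  (forall x, ~ In x (ctx_vars G1) -> wf_fm (CVar x tau :: G1) (open_fm 0 (tfv x) A0)) ->
  (forall y, lc_tm (f y)) -> subst_ok G1 G f -> has_ty G t tau ->
  wf_instance G (open_fm 0 t (msubst_fm f A0)).
Proof.
  intros Hw Hlc [Hv Hn] Ht.
  destruct (exists_fresh_nat (ctx_vars G1 ++ fv_fm A0)) as [x Hx]; rewrite in_app_iff in Hx.
  assert (Hlc' : forall y, lc_tm (update f x t y)).
  { intros y; unfold update; destruct (Nat.eqb y x); eauto using has_ty_lc. }
  exists (CVar x tau :: G1), (open_fm 0 (tfv x) A0), (update f x t);
    split; [|split; [|split; [exact Hlc'|split]]].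
  - apply Hw; tauto.
  - rewrite msubst_open_fm by auto. simpl. unfold update at 1. rewrite Nat.eqb_refl.
    rewrite msubst_fm_update_notin; tauto.
  - intros y s [E|E]; unfold update.
    + injection E as -> ->. rewrite Nat.eqb_refl; auto.
    + destruct (Nat.eqb_spec y x) as [->|]; auto.
      exfalso; apply Hx; left; eapply in_ctx_vars; eauto.
  - intros c nu [E|E]; [discriminate|auto].
Qed.

Lemma wf_instance_subformulas G A : wf_instance G A ->
  match A with
  | fAnd B C | fOr B C | fImp B C => wf_instance G B /\ wf_instance G C
  | fAll tau B | fEx tau B => forall t, has_ty G t tau -> wf_instance G (open_fm 0 t B)
  | fNew nu B => forall c, ~ In c (ctx_names G) -> wf_instance (CName c nu :: G) (open_nfm 0 c B)
  | _ => True
  end.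
Proof.
  intros (G1 & A0 & f & Hw & -> & Hlc & [Hv Hn]).
  destruct A0; simpl; auto; inversion Hw; subst;
    try (split; eapply wf_instance_intro; eauto; split; auto; fail);
    try (intros; eapply wf_instance_open; eauto; split; auto; fail).
  intros c Hc. change (map_atoms (msubst_tm f) A0) with (msubst_fm f A0).
  rewrite <- msubst_open_nfm by auto.
  apply wf_instance_intro with (G1 := CName c nu :: G1); [|exact Hlc|split].
  - apply H1. intros Hc1. apply in_ctx_names_inv in Hc1 as [nu' Hn1].
    eapply Hc, in_ctx_names, Hn; eauto.
  - intros x s [E|E]; [discriminate|]. eapply has_ty_weaken, Hv; eauto using incl_tl, incl_refl.
  - intros c' nu' [E|E]; [left|right]; auto.
Qed.

Lemma ax_instance_atoms {G Ps Qss} : ax_instance G Ps Qss -> Forall (@is_atom Sg) Ps.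
Proof. destruct 1; repeat constructor; auto. Qed.

Section Swapping.
Variables (sa sb : tm) (nu : nat).
Hypotheses (sa_lc : lc_tm sa) (sb_lc : lc_tm sb).

Lemma open_swap_fm k u A : open_fm k u (swap_fm sa sb A) = swap_fm sa sb (open_fm k u A).
Proof.
  destruct sa_lc as [Ha _], sb_lc as [Hb _]; unfold swap_fm; revert k;
    induction A; intros k; simpl; f_equal; rewrite ?Ha, ?Hb; auto.
  rewrite !map_map; apply map_ext; intros; simpl; rewrite Ha, Hb; auto.
Qed.

Lemma open_n_swap_fm k c A : open_nfm k c (swap_fm sa sb A) = swap_fm sa sb (open_nfm k c A).
Proof.
  destruct sa_lc as [_ Ha], sb_lc as [_ Hb]; unfold swap_fm; revert k;
    induction A; intros k; simpl; f_equal; rewrite ?Ha, ?Hb; auto.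
  rewrite !map_map; apply map_ext; intros; simpl; rewrite Ha, Hb; auto.
Qed.

Lemma wf_atom_swap G P : has_ty G sa (TName nu) -> has_ty G sb (TName nu) ->
  wf_atom G P -> wf_atom G (swap_fm sa sb P).
Proof.
  intros Ha Hb [HP Hw]; split; [apply is_atom_map_atoms; auto|].
  destruct P; try contradiction; inversion Hw; subst; simpl.
  - constructor. clear HP Hw. induction H1; simpl; constructor; eauto using ty_swap.
  - eapply wf_eq; eapply ty_swap; eauto.
  - eapply wf_fresh; eapply ty_swap; eauto.
Qed.

Lemma der_E3 G (Gam Del : list fm) n P : has_ty G sa (TName nu) -> has_ty G sb (TName nu) ->
  wf_atom G P -> In P Gam -> der G (swap_fm sa sb P :: Gam) Del n -> der G Gam Del n.
Proof.
  intros Ha Hb [HP Hw] Hi Hd. apply in_split in Hi as (l1 & l2 & ->).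
  apply (@d_ax Sg G _ (l1 ++ l2) Del [P] [[swap_fm sa sb P]]).
  - eapply ax_E3; eauto.
  - simpl. apply Permutation_sym, Permutation_middle.
  - intros Qs [<-|[]]. exact Hd.
Qed.

Definition swap_twice (t : tm) : tm := tswap sa sb (tswap sa sb t).

Lemma der_S2 G (Gam Del : list fm) n t tau : has_ty G sa (TName nu) -> has_ty G sb (TName nu) ->
  has_ty G t tau -> der G (fEq (swap_twice t) t :: Gam) Del n -> der G Gam Del n.
Proof.
  intros Ha Hb Ht Hd.
  apply (@d_ax Sg G _ Gam Del [] [[fEq (swap_twice t) t]]).
  - eapply ax_S2; eauto.
  - apply Permutation_refl.
  - intros Qs [<-|[]]. exact Hd.
Qed.

(* The atom [mk args] is rewritten argument by argument, replacing [swap_twice s] by [s]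
   with the equation [swap_twice s ~ s] of rule S2 and the substitution rule. *)
Lemma der_unswap_twice_args G (Del : list fm) n (mk : list tm -> fm) k :
  has_ty G sa (TName nu) -> has_ty G sb (TName nu) ->
  (forall l, length l = k -> is_atom (mk l)) ->
  (forall g l, map_atoms g (mk l) = mk (map g l)) ->
  forall rest done Gam, length done + length rest = k ->
  Forall (fun s => exists tau, has_ty G s tau) rest ->
  In (mk (done ++ map swap_twice rest)) Gam -> In (mk (done ++ rest)) Del -> der G Gam Del n.
Proof.
  intros Ha Hb Hat Hmap rest.
  induction rest as [|s rest IH]; intros done Gam Hlen Hty HG HD.
  - rewrite app_nil_r in *. eapply d_init; eauto. apply Hat. simpl in Hlen; lia.
  - inversion Hty as [|? ? [tau Hs] Hty']; subst.
    destruct (exists_fresh_nat (flat_map (@fv_tm Sg) (done ++ map swap_twice rest))) as [z Hz].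
    set (Q := mk (done ++ tfv z :: map swap_twice rest)).
    assert (HQ : forall v, map_atoms (subst_tm z v) Q = mk (done ++ v :: map swap_twice rest)).
    { intros v. unfold Q. rewrite Hmap, map_app. simpl. rewrite Nat.eqb_refl.
      rewrite flat_map_app, in_app_iff in Hz.
      f_equal; f_equal; [|f_equal]; apply map_id_Forall, Forall_forall; intros x Hx;
        apply subst_tm_notin; intro; apply Hz; [left|right]; apply in_flat_map; eauto. }
    apply (der_S2 G Gam Del n s tau); auto.
    apply in_split in HG as (l1 & l2 & HGe).
    apply (@d_eqS Sg G _ (l1 ++ l2) Del Q z (swap_twice s) s).
    + apply Hat. rewrite length_app in *; simpl in *; rewrite length_map; lia.
    + rewrite HQ, HGe. apply perm_skip, Permutation_sym, Permutation_middle.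
    + rewrite HQ. apply (IH (done ++ [s])); auto.
      * rewrite length_app; simpl in *; lia.
      * left. rewrite <- app_assoc. reflexivity.
      * rewrite <- app_assoc. exact HD.
Qed.

Lemma der_init_unswap G (Gam Del : list fm) n psi :
  has_ty G sa (TName nu) -> has_ty G sb (TName nu) ->
  wf_atom G psi -> In (swap_fm sa sb psi) Gam -> In psi Del -> der G Gam Del n.
Proof.
  intros Ha Hb Hpsi HG HD.
  apply (der_E3 G Gam Del n (swap_fm sa sb psi)); auto using wf_atom_swap.
  destruct Hpsi as [HP Hw]; destruct psi; try contradiction; inversion Hw; subst.
  - apply (der_unswap_twice_args G Del n (fPred p) (length ts)) with (rest := ts) (done := []);
      auto.
    + clear -H1. induction H1; constructor; eauto.
    + left. unfold swap_fm; simpl. rewrite map_map. reflexivity.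
  - apply (der_unswap_twice_args G Del n
      (fun l => match l with [x; y] => fEq x y | _ => fTop end) 2) with (rest := [t; u]) (done := []);
      auto; [intros [|x [|y [|]]]; simpl; intros; try discriminate; exact I
            |intros g [|x [|y [|]]]; reflexivity|repeat constructor; eauto|left; reflexivity].
  - apply (der_unswap_twice_args G Del n
      (fun l => match l with [x; y] => fFresh x y | _ => fTop end) 2) with (rest := [a; t]) (done := []);
      auto; [intros [|x [|y [|]]]; simpl; intros; try discriminate; exact I
            |intros g [|x [|y [|]]]; reflexivity|repeat constructor; eauto|left; reflexivity].
Qed.

Definition unswap G (X Y : fm) : Prop :=
  X = Y \/ exists psi, wf_instance G psi /\ X = swap_fm sa sb psi /\ Y = psi.

(* The target sequent is the source one with some formulas [(a b).psi] replaced by [psi],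
   up to permutation and weakening by well-formed atoms; the atoms arise when rule E3
   restores a swapped atom that a nonlogical rule needs. *)
Definition unswap_seq G (Ls Lt : list fm) : Prop :=
  exists core extra,
    Forall2 (unswap G) Ls core /\ Permutation Lt (core ++ extra) /\ Forall (wf_atom G) extra.

Lemma unswap_refl G X : unswap G X X.
Proof. left; reflexivity. Qed.

Lemma unswap_swap G psi : wf_instance G psi -> unswap G (swap_fm sa sb psi) psi.
Proof. intros; right; eauto. Qed.

Lemma unswap_weaken G G' X Y : incl G G' -> unswap G X Y -> unswap G' X Y.
Proof.
  intros Hi [E|(psi & HW & E1 & E2)]; [left|right]; eauto using wf_instance_weaken.
Qed.

Lemma unswap_fv_fn G X Y : unswap G X Y -> incl (fv_fm Y) (fv_fm X) /\ incl (fn_fm Y) (fn_fm X).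
Proof.
  intros [<-|(psi & _ & -> & ->)]; [split; apply incl_refl|].
  split; apply syms_map_atoms_incl; intros t y Hy; simpl; rewrite !in_app_iff; auto.
Qed.

Lemma unswap_top {G Y} : unswap G fTop Y -> Y = fTop.
Proof.
  intros [<-|(psi & _ & E & ->)]; auto. unfold swap_fm in E; destruct psi; try discriminate; auto.
Qed.

Lemma unswap_bot {G Y} : unswap G fBot Y -> Y = fBot.
Proof.
  intros [<-|(psi & _ & E & ->)]; auto. unfold swap_fm in E; destruct psi; try discriminate; auto.
Qed.

Local Ltac fold_swap_fm :=
  repeat match goal with
  | |- context [map_atoms (tswap sa sb) ?p] => change (map_atoms (tswap sa sb) p) with (swap_fm sa sb p)
  end.

Local Ltac unswap_binary :=
  intros [<-|(psi & HW & E & ->)]; [eauto using unswap_refl|];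
  unfold swap_fm in E; destruct psi; try discriminate; injection E as -> ->;
  apply wf_instance_subformulas in HW as [HW1 HW2];
  do 2 eexists; split; [reflexivity|split; apply unswap_swap; assumption].

Lemma unswap_and {G A B Y} : unswap G (fAnd A B) Y ->
  exists A' B', Y = fAnd A' B' /\ unswap G A A' /\ unswap G B B'.
Proof. unswap_binary. Qed.

Lemma unswap_or {G A B Y} : unswap G (fOr A B) Y ->
  exists A' B', Y = fOr A' B' /\ unswap G A A' /\ unswap G B B'.
Proof. unswap_binary. Qed.

Lemma unswap_imp {G A B Y} : unswap G (fImp A B) Y ->
  exists A' B', Y = fImp A' B' /\ unswap G A A' /\ unswap G B B'.
Proof. unswap_binary. Qed.

Local Ltac unswap_quantifier :=
  intros [<-|(psi & HW & E & ->)]; [eauto using unswap_refl|];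
  unfold swap_fm in E; destruct psi; try discriminate; injection E as -> ->;
  eexists; split; [reflexivity|]; intros G' t Hi Ht; fold_swap_fm;
  rewrite open_swap_fm; apply unswap_swap;
  apply wf_instance_weaken with (G' := G') in HW; [|exact Hi];
  apply wf_instance_subformulas in HW; auto.

Lemma unswap_all {G tau A Y} : unswap G (fAll tau A) Y ->
  exists A', Y = fAll tau A' /\ forall G' t, incl G G' -> has_ty G' t tau ->
    unswap G' (open_fm 0 t A) (open_fm 0 t A').
Proof. unswap_quantifier. Qed.

Lemma unswap_ex {G tau A Y} : unswap G (fEx tau A) Y ->
  exists A', Y = fEx tau A' /\ forall G' t, incl G G' -> has_ty G' t tau ->
    unswap G' (open_fm 0 t A) (open_fm 0 t A').
Proof. unswap_quantifier. Qed.

Lemma unswap_new {G nu' A Y} : unswap G (fNew nu' A) Y ->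
  exists A', Y = fNew nu' A' /\ forall c, ~ In c (ctx_names G) ->
    unswap (CName c nu' :: G) (open_nfm 0 c A) (open_nfm 0 c A').
Proof.
  intros [<-|(psi & HW & E & ->)]; [eauto using unswap_refl|].
  unfold swap_fm in E; destruct psi; try discriminate; injection E as -> ->.
  eexists; split; [reflexivity|]; intros c Hc; fold_swap_fm.
  rewrite open_n_swap_fm; apply unswap_swap.
  apply wf_instance_subformulas in HW; auto.
Qed.

Lemma unswap_seq_refl G L : unswap_seq G L L.
Proof.
  exists L, []; rewrite app_nil_r; split; [|split; auto].
  induction L; constructor; auto using unswap_refl.
Qed.

Lemma unswap_seq_perm_l G Ls Ls' Lt : Permutation Ls Ls' -> unswap_seq G Ls Lt -> unswap_seq G Ls' Lt.
Proof.
  intros Hp (core & ex & HF & Hp2 & HE).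
  destruct (Permutation_Forall2 Hp HF) as (core' & Pc & HF').
  exists core', ex; split; auto; split; auto.
  eapply Permutation_trans; [eauto|]. apply Permutation_app_tail; auto.
Qed.

Lemma unswap_seq_perm_r G Ls Lt Lt' : Permutation Lt Lt' -> unswap_seq G Ls Lt -> unswap_seq G Ls Lt'.
Proof.
  intros Hp (core & ex & HF & Hp2 & HE). exists core, ex; split; auto; split; auto.
  eapply Permutation_trans; [apply Permutation_sym|]; eauto.
Qed.

Lemma unswap_seq_cons G X Y Ls Lt :
  unswap G X Y -> unswap_seq G Ls Lt -> unswap_seq G (X :: Ls) (Y :: Lt).
Proof.
  intros HR (core & ex & HF & Hp & HE). exists (Y :: core), ex; split; auto; split; auto.
  apply perm_skip; auto.
Qed.

Lemma unswap_seq_app_refl G L Ls Lt : unswap_seq G Ls Lt -> unswap_seq G (L ++ Ls) (L ++ Lt).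
Proof. induction L; simpl; auto using unswap_seq_cons, unswap_refl. Qed.

Lemma unswap_seq_atom G Z Ls Lt : wf_atom G Z -> unswap_seq G Ls Lt -> unswap_seq G Ls (Z :: Lt).
Proof.
  intros HZ (core & ex & HF & Hp & HE). exists core, (Z :: ex); split; auto; split; auto.
  eapply Permutation_trans; [apply perm_skip; eauto|]. apply Permutation_middle.
Qed.

Lemma unswap_seq_pick {G X Ls Ls' Lt} : Permutation Ls (X :: Ls') -> unswap_seq G Ls Lt ->
  exists Y Lt', unswap G X Y /\ Permutation Lt (Y :: Lt') /\ unswap_seq G Ls' Lt'.
Proof.
  intros Hp HR. apply unswap_seq_perm_l with (1 := Hp) in HR as (core & ex & HF & Hp2 & HE).
  inversion HF as [|? Y ? core' HR HF']; subst.
  exists Y, (core' ++ ex); split; auto; split; auto.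
  exists core', ex; auto.
Qed.

Lemma unswap_seq_in {G X Ls Lt} : unswap_seq G Ls Lt -> In X Ls -> exists Y, unswap G X Y /\ In Y Lt.
Proof.
  intros HR Hi. apply in_split in Hi as (l1 & l2 & ->).
  destruct (unswap_seq_pick (Permutation_sym (Permutation_middle l1 l2 X)) HR)
    as (Y & Lt' & HXY & Hp & _).
  exists Y; split; auto. eapply Permutation_in; [apply Permutation_sym; eauto|left; auto].
Qed.

Lemma unswap_seq_weaken G G' Ls Lt : incl G G' -> unswap_seq G Ls Lt -> unswap_seq G' Ls Lt.
Proof.
  intros Hi (core & ex & HF & Hp & HE). exists core, ex; split; [|split; auto].
  - eapply Forall2_impl; [|eauto]. eauto using unswap_weaken.
  - eapply Forall_impl; [|eauto]. eauto using wf_atom_weaken.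
Qed.

Lemma unswap_seq_extend e G Ls Lt : unswap_seq G Ls Lt -> unswap_seq (e :: G) Ls Lt.
Proof. apply unswap_seq_weaken, incl_tl, incl_refl. Qed.

Lemma unswap_seq_fv_fn G Ls Lt Z : unswap_seq G Ls Lt -> In Z Lt ->
  (exists X, In X Ls /\ incl (fv_fm Z) (fv_fm X) /\ incl (fn_fm Z) (fn_fm X)) \/
  (incl (fv_fm Z) (ctx_vars G) /\ incl (fn_fm Z) (ctx_names G)).
Proof.
  intros (core & ex & HF & Hp & HE) Hi. eapply Permutation_in in Hi; [|eauto].
  apply in_app_iff in Hi as [Hi|Hi].
  - left. destruct (Forall2_in_r HF Hi) as (X & HX & HR). exists X; split; auto.
    eapply unswap_fv_fn; eauto.
  - right. rewrite Forall_forall in HE; auto using wf_atom_fv_fn.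
Qed.

Lemma fresh_var_unswap {y G Ls Ds Lt Dt} : fresh_var y G Ls Ds ->
  unswap_seq G Ls Lt -> unswap_seq G Ds Dt -> fresh_var y G Lt Dt.
Proof.
  intros [Hy HA] RL RD; split; auto. intros Z HZ Hin.
  destruct HZ as [HZ|HZ]; [apply unswap_seq_fv_fn with (1 := RL) in HZ|apply unswap_seq_fv_fn with (1 := RD) in HZ];
    destruct HZ as [(X & HX & Hv & _)|[Hv _]]; [eapply (HA X)|apply Hy|eapply (HA X)|apply Hy]; auto.
Qed.

Lemma fresh_name_unswap {c G Ls Ds Lt Dt} : fresh_name c G Ls Ds ->
  unswap_seq G Ls Lt -> unswap_seq G Ds Dt -> fresh_name c G Lt Dt.
Proof.
  intros [Hc HA] RL RD; split; auto. intros Z HZ Hin.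
  destruct HZ as [HZ|HZ]; [apply unswap_seq_fv_fn with (1 := RL) in HZ|apply unswap_seq_fv_fn with (1 := RD) in HZ];
    destruct HZ as [(X & HX & _ & Hn)|[_ Hn]]; [eapply (HA X)|apply Hc|eapply (HA X)|apply Hc]; auto.
Qed.

Definition restorable G (Lt Adds : list fm) : Prop :=
  Forall (fun A => exists psi, wf_atom G psi /\ In psi Lt /\ A = swap_fm sa sb psi) Adds.

Lemma der_restorable {G Lt Adds Del n} : has_ty G sa (TName nu) -> has_ty G sb (TName nu) ->
  restorable G Lt Adds -> der G (Adds ++ Lt) Del n -> der G Lt Del n.
Proof.
  intros Ha Hb HA; induction HA as [|A Adds (psi & Hpsi & Hin & ->) HA IH]; simpl; auto.
  intros Hd. apply IH. eapply der_E3; eauto. apply in_or_app; auto.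
Qed.

Lemma unswap_seq_restore {G Ps Ls Lt} : Forall (@is_atom Sg) Ps -> unswap_seq G (Ps ++ Ls) Lt ->
  exists Adds Lt', restorable G Lt Adds /\ Permutation (Adds ++ Lt) (Ps ++ Lt') /\
    unswap_seq G Ls Lt'.
Proof.
  intros HPs; revert Ls Lt; induction HPs as [|X Ps HX HPs IH]; intros Ls Lt HR.
  - exists [], Lt; split; [constructor|auto].
  - destruct (unswap_seq_pick (Permutation_refl _) HR) as (Y & Lt1 & HXY & Hp & HR1).
    destruct (IH _ _ HR1) as (Adds & Lt' & HA & Hp' & HR').
    assert (HA1 : restorable G Lt Adds).
    { eapply Forall_impl; [|exact HA]. intros A (psi & Hpsi & Hin & ->).
      exists psi; split; [|split]; auto. rewrite Hp; right; exact Hin. }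
    destruct HXY as [<-|(psi & HW & -> & ->)].
    + exists Adds, Lt'; split; [|split]; auto.
      rewrite Hp, <- Permutation_middle, Hp'. reflexivity.
    + assert (Hpsi : wf_atom G psi) by (apply wf_instance_atom; auto; eapply is_atom_map_atoms; eauto).
      exists (swap_fm sa sb psi :: Adds), (psi :: Lt'); split; [|split].
      * constructor; auto. exists psi; split; [|split]; auto. rewrite Hp; left; auto.
      * simpl. rewrite Hp, <- Permutation_middle, Hp'. simpl. apply perm_skip.
        rewrite Permutation_middle. reflexivity.
      * apply unswap_seq_atom; auto.
Qed.

(* Before a nonlogical rule uses the atoms [Ps] of the source, rule E3 restores in the
   target every atom of [Ps] that was unswapped. *)
Lemma der_restore_atoms {G Ps Gs Gs' Gt Dt n} :
  has_ty G sa (TName nu) -> has_ty G sb (TName nu) ->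
  Forall (@is_atom Sg) Ps -> Permutation Gs (Ps ++ Gs') -> unswap_seq G Gs Gt ->
  (forall Gt' Lt', Permutation Gt' (Ps ++ Lt') -> unswap_seq G Gs Gt' -> der G Gt' Dt n) ->
  der G Gt Dt n.
Proof.
  intros Ha Hb HPs Hp HR Hder.
  apply unswap_seq_perm_l with (1 := Hp) in HR.
  destruct (unswap_seq_restore HPs HR) as (Adds & Lt' & HA & Hp' & HR').
  apply (der_restorable Ha Hb HA), (Hder _ Lt' Hp').
  apply unswap_seq_perm_l with (1 := Permutation_sym Hp).
  apply unswap_seq_perm_r with (1 := Permutation_sym Hp'), unswap_seq_app_refl, HR'.
Qed.

Lemma der_unswap_init {G Gs Ds Gt Dt n P} :
  has_ty G sa (TName nu) -> has_ty G sb (TName nu) -> is_atom P -> In P Gs -> In P Ds ->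
  unswap_seq G Gs Gt -> unswap_seq G Ds Dt -> der G Gt Dt n.
Proof.
  intros Ha Hb HP HG HD RG RD. apply in_split in HG as (l1 & l2 & ->).
  apply (der_restore_atoms Ha Hb (Forall_cons _ HP (Forall_nil _))
    (Permutation_sym (Permutation_middle _ _ _)) RG).
  intros Gt' Lt' Hp _. assert (HPt : In P Gt') by (rewrite Hp; left; auto).
  destruct (unswap_seq_in RD HD) as (Y & [<-|(psi & HW & -> & ->)] & HY).
  - eapply d_init; eauto.
  - apply is_atom_map_atoms in HP. eapply der_init_unswap; eauto using wf_instance_atom.
Qed.

Lemma der_unswap G Gs Ds n : der G Gs Ds n ->
  has_ty G sa (TName nu) -> has_ty G sb (TName nu) ->
  forall Gt Dt, unswap_seq G Gs Gt -> unswap_seq G Ds Dt -> der G Gt Dt n.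
Proof.
  induction 1 as
  [ G Gam Del P n HP HG HD
  | G Gam Del n HT
  | G Gam Del n HB
  | G Gam Gam' Del A B n Hp Hd IH
  | G Gam Del Del' A B n Hp Hd1 IH1 Hd2 IH2
  | G Gam Gam' Del A B n Hp Hd1 IH1 Hd2 IH2
  | G Gam Del Del' A B n Hp Hd IH
  | G Gam Gam' Del A B n Hp Hd1 IH1 Hd2 IH2
  | G Gam Del Del' A B n Hp Hd IH
  | G Gam Gam' Del tau A t n Hp Ht Hd IH
  | G Gam Del Del' tau A y n Hp Hf Hd IH
  | G Gam Gam' Del tau A y n Hp Hf Hd IH
  | G Gam Del Del' tau A t n Hp Ht Hd IH
  | G Gam Del Del' nu' A c n Hp Hf Hd IH
  | G Gam Gam' Del nu' A c n Hp Hf Hd IH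
  | G Gam Del t tau n Ht Hd IH
  | G Gam Gam' Del Q z t u n HQ Hp Hd IH
  | G Gam Gam' Del Ps Qss n Hax Hp Hd IH
  | G Gam Del t nu' sigma c x n Ht Hne Hfa Hfx Hd IH
  | G Gam Del c nu' n Hf Hd IH
  | G Gam Del P n Hbar Hd IH ];
  intros Ha Hb Gt Dt RG RD.
  - exact (der_unswap_init Ha Hb HP HG HD RG RD).
  - destruct (unswap_seq_in RD HT) as (Y & HR & HY). rewrite (unswap_top HR) in HY.
    eapply d_topR; eauto.
  - destruct (unswap_seq_in RG HB) as (Y & HR & HY). rewrite (unswap_bot HR) in HY.
    eapply d_botL; eauto.
  - destruct (unswap_seq_pick Hp RG) as (Y & Gt' & HR & HpY & RG').
    destruct (unswap_and HR) as (A' & B' & -> & HA & HB).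
    eapply d_andL; [exact HpY|]. apply IH; auto. repeat apply unswap_seq_cons; auto.
  - destruct (unswap_seq_pick Hp RD) as (Y & Dt' & HR & HpY & RD').
    destruct (unswap_and HR) as (A' & B' & -> & HA & HB).
    eapply d_andR; [exact HpY|apply IH1|apply IH2]; auto; apply unswap_seq_cons; auto.
  - destruct (unswap_seq_pick Hp RG) as (Y & Gt' & HR & HpY & RG').
    destruct (unswap_or HR) as (A' & B' & -> & HA & HB).
    eapply d_orL; [exact HpY|apply IH1|apply IH2]; auto; apply unswap_seq_cons; auto.
  - destruct (unswap_seq_pick Hp RD) as (Y & Dt' & HR & HpY & RD').
    destruct (unswap_or HR) as (A' & B' & -> & HA & HB).
    eapply d_orR; [exact HpY|]. apply IH; auto. repeat apply unswap_seq_cons; auto.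
  - destruct (unswap_seq_pick Hp RG) as (Y & Gt' & HR & HpY & RG').
    destruct (unswap_imp HR) as (A' & B' & -> & HA & HB).
    eapply d_impL; [exact HpY|apply IH1|apply IH2]; auto; apply unswap_seq_cons; auto.
  - destruct (unswap_seq_pick Hp RD) as (Y & Dt' & HR & HpY & RD').
    destruct (unswap_imp HR) as (A' & B' & -> & HA & HB).
    eapply d_impR; [exact HpY|]. apply IH; auto; apply unswap_seq_cons; auto.
  - destruct (unswap_seq_pick Hp RG) as (Y & Gt' & HR & HpY & RG').
    destruct (unswap_all HR) as (A' & -> & HA).
    eapply d_allL; [exact HpY|exact Ht|]. apply IH; auto.
    repeat apply unswap_seq_cons; auto using incl_refl.
  - destruct (unswap_seq_pick Hp RD) as (Y & Dt' & HR & HpY & RD').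
    destruct (unswap_all HR) as (A' & -> & HA).
    eapply d_allR; [exact HpY|exact (fresh_var_unswap Hf RG RD)|].
    apply IH; eauto using has_ty_extend, unswap_seq_extend.
    apply unswap_seq_cons; auto using unswap_seq_extend, ty_var, in_eq, incl_tl, incl_refl.
  - destruct (unswap_seq_pick Hp RG) as (Y & Gt' & HR & HpY & RG').
    destruct (unswap_ex HR) as (A' & -> & HA).
    eapply d_exL; [exact HpY|exact (fresh_var_unswap Hf RG RD)|].
    apply IH; eauto using has_ty_extend, unswap_seq_extend.
    apply unswap_seq_cons; auto using unswap_seq_extend, ty_var, in_eq, incl_tl, incl_refl.
  - destruct (unswap_seq_pick Hp RD) as (Y & Dt' & HR & HpY & RD').
    destruct (unswap_ex HR) as (A' & -> & HA).
    eapply d_exR; [exact HpY|exact Ht|]. apply IH; auto.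
    repeat apply unswap_seq_cons; auto using incl_refl.
  - destruct (unswap_seq_pick Hp RD) as (Y & Dt' & HR & HpY & RD').
    destruct (unswap_new HR) as (A' & -> & HA).
    eapply d_newR; [exact HpY|exact (fresh_name_unswap Hf RG RD)|].
    apply IH; eauto using has_ty_extend, unswap_seq_extend.
    apply unswap_seq_cons; [apply HA, Hf|auto using unswap_seq_extend].
  - destruct (unswap_seq_pick Hp RG) as (Y & Gt' & HR & HpY & RG').
    destruct (unswap_new HR) as (A' & -> & HA).
    eapply d_newL; [exact HpY|exact (fresh_name_unswap Hf RG RD)|].
    apply IH; eauto using has_ty_extend, unswap_seq_extend.
    apply unswap_seq_cons; [apply HA, Hf|auto using unswap_seq_extend].
  - eapply d_eqR; [exact Ht|]. apply IH; auto using unswap_seq_cons, unswap_refl.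
  - assert (HPs : Forall (@is_atom Sg) [fEq t u; map_atoms (subst_tm z t) Q]).
    { repeat constructor. apply is_atom_map_atoms; auto. }
    apply (der_restore_atoms Ha Hb HPs Hp RG). intros Gt' Lt' Hp' RG'.
    eapply d_eqS; [exact HQ|exact Hp'|]. apply IH; auto using unswap_seq_cons, unswap_refl.
  - apply (der_restore_atoms Ha Hb (ax_instance_atoms Hax) Hp RG). intros Gt' Lt' Hp' RG'.
    eapply d_ax; [exact Hax|exact Hp'|]. intros Qs HQs.
    apply (IH Qs HQs); auto using unswap_seq_app_refl.
  - eapply d_A3; eauto using fresh_var_unswap.
    apply IH; eauto using has_ty_extend, unswap_seq_cons, unswap_refl, unswap_seq_extend.
  - eapply d_F; eauto using fresh_name_unswap.
    apply IH; eauto using has_ty_extend, unswap_seq_extend.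
  - eapply d_bar; eauto. apply IH; auto using unswap_seq_cons, unswap_refl.
Qed.

End Swapping.
End NominalSequents.

Theorem mainTheorem17 (S : signature) (G : ctx) (phi : fm S) (a b : tm S) (nu : nat)
  (Gam Del : list (fm S)) (n : nat) :
  ctx_ok G -> wf_fm G phi -> has_ty G a (TName nu) -> has_ty G b (TName nu) ->
  (der G (swap_fm a b phi :: Gam) Del n -> der G (phi :: Gam) Del n) /\
  (der G Gam (swap_fm a b phi :: Del) n -> der G Gam (phi :: Del) n).
Proof.
  intros _ Hphi Ha Hb.
  assert (Hlc_a : lc_tm a) by (eapply has_ty_lc; eauto).
  assert (Hlc_b : lc_tm b) by (eapply has_ty_lc; eauto).
  assert (Hswap : unswap a b G (swap_fm a b phi) phi)
    by (apply unswap_swap, wf_instance_of_wf; exact Hphi).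
  split; intros Hd; apply (der_unswap a b nu Hlc_a Hlc_b _ _ _ _ Hd Ha Hb);
    auto using unswap_seq_cons, unswap_seq_refl.
Qed.
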